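(* Let $d\ge2$, $n\ge d+1$, $p\ge2$ a prime, $\Lambda\in X_{n,d}$, $M=M^p_n(\Lambda)$ with group $H_0\cong\mathbb{Z}_p^n$. If $K<H_0$ is a subgroup isomorphic to $\mathbb{Z}_p^{n-r}$ (for some integer $r\ge0$) acting freely on $M$ (i.e. no non-trivial element of $K$ has a fixed point on $M$), then $n+1\le (p^r-1)/(p-1)$. In particular no such $K$ exists with $r=1$, and for $p=2$ none exists with $r=2$.
   Context: For $q=[\rho_1:\cdots:\rho_{d+1}]\in\mathbb{P}^d$ let $L_q=\{\rho_1t_1+\cdots+\rho_{d+1}t_{d+1}=0\}$. Hyperplanes are in general position if any $\min\{N,d+1\}$ of their $N$ coefficient vectors are linearly independent. Let $e_1,\dots,e_{d+1}$ be the coordinate points of $\mathbb{P}^d$ and $e_{d+2}=[1:\cdots:1]$. For $\Lambda=(\lambda_{i,j})_{1\le i\le n-d-1,\,1\le j\le d}\in\mathbb{C}^{d(n-d-1)}$ put $L_j(\Lambda)=L_{e_j}$ ($1\le j\le d+2$) and $L_j(\Lambda)=L_{[\lambda_{j-d-2,1}:\cdots:\lambda_{j-d-2,d}:1]}$ ($d+3\le j\le n+1$); $X_{n,d}$ is the set of $\Lambda$ for which $L_1(\Lambda),\dots,L_{n+1}(\Lambda)$ are in general position. For $\Lambda\in X_{n,d}$, setting $\lambda_{0,j}=1$, $M^k_n(\Lambda)\subset\mathbb{P}^n$ is the common zero set of $\lambda_{i,1}x_1^k+\cdots+\lambda_{i,d}x_d^k+x_{d+1}^k+x_{d+2+i}^k$,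 $i=0,\dots,n-d-1$. $H_0=\langle\varphi_1,\dots,\varphi_{n+1}\rangle$, where $\varphi_j$ multiplies the $j$-th homogeneous coordinate by $e^{2\pi\sqrt{-1}/k}$. *)

From mathcomp Require Import all_boot all_order all_algebra all_fingroup.
From mathcomp Require Import all_classical all_reals all_analysis.
From mathcomp Require Import complex.
Set Implicit Arguments. Unset Strict Implicit. Unset Printing Implicit Defensive.
Import GRing.Theory Num.Theory.
Local Open Scope ring_scope.

Definition mx_at (C : nzRingType) m k (A : 'M[C]_(m, k)) (i j : nat) : C :=
  match insub i, insub j with
  | Some i', Some j' => A i' j'
  | _, _ => 0
  end.

(* Hyperplanes with coefficient vectors v_1..v_N in C^m are in general
   position: any min(N,m) of the coefficient vectors are linearly
   independent (rows of the matrix are linearly free). *)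
Definition general_position (F : fieldType) N m (v : 'I_N -> 'rV[F]_m) : Prop :=
  forall f : 'I_(minn N m) -> 'I_N, injective f ->
    row_free (\matrix_(i < minn N m) v (f i)).

(* Coefficient vector of L_j(Lambda), j = 0..n (0-based; paper index j+1),
   in C^(d+1).  Lambda : 'M_(n-d-1, d), entries 0-based. *)
Definition coefL (C : nzRingType) n d (Lam : 'M[C]_(n - d - 1, d))
    (j : 'I_n.+1) : 'rV[C]_(d.+1) :=
  \row_(k < d.+1)
    if (j < d.+1)%N then (if (nat_of_ord j == nat_of_ord k) then 1 else 0)
    else if nat_of_ord j == d.+1 then 1
    else if (k < d)%N then mx_at Lam (j - d.+2) k else 1.

Definition X_nd (C : fieldType) n d (Lam : 'M[C]_(n - d - 1, d)) : Prop :=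
  general_position (coefL Lam).

(* lambda_{i,j} with lambda_{0,j} = 1 (i = 0..n-d-1, j = 0..d-1, 0-based j) *)
Definition lam0 (C : nzRingType) n d (Lam : 'M[C]_(n - d - 1, d)) (i j : nat) : C :=
  if i == 0%N then 1 else mx_at Lam i.-1 j.

(* Homogeneous coordinates x_1..x_{n+1} are x 0 .. x n. *)
Definition coord (C : nzRingType) n (x : 'I_n.+1 -> C) (j : nat) : C := x (inord j).

Definition on_fermat (C : nzRingType) n d k (Lam : 'M[C]_(n - d - 1, d))
    (x : 'I_n.+1 -> C) : Prop :=
  forall i : nat, (i < n - d)%N ->
    \sum_(j < d) lam0 Lam i j * coord x j ^+ k
      + coord x d ^+ k + coord x (d.+1 + i) ^+ k = 0.

(* A point of P^n: a nonzero vector up to scaling. *)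
Definition nonzero_vec (C : nzRingType) n (x : 'I_n.+1 -> C) : Prop :=
  exists j, x j != 0.

Definition zeta (R : realType) (k : nat) : R[i] :=
  (cos (2 * pi / k%:R) +i* sin (2 * pi / k%:R))%C.

(* Since phi_1 ... phi_{n+1} = id on P^n,
   every element of H_0 is uniquely phi_1^{a_1} ... phi_n^{a_n} with
   a in (Z_k)^n; we identify H_0 with the additive group 'rV['Z_k]_n.
   The element a acts on homogeneous coordinates by
   x_j |-> zeta^{a_j} x_j (j <= n), x_{n+1} |-> x_{n+1}. *)
Definition H0_act (R : realType) k n (a : 'rV['Z_k]_n) (x : 'I_n.+1 -> R[i])
    : 'I_n.+1 -> R[i] :=
  fun j => match @insub nat (fun m => (m < n)%N) 'I_n (nat_of_ord j) with
           | Some j' => zeta R k ^+ (nat_of_ord (a 0 j')) * x j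
           | None => x j
           end.

Definition fixed_point_on_M (R : realType) n d k (Lam : 'M[R[i]]_(n - d - 1, d))
    (a : 'rV['Z_k]_n) (x : 'I_n.+1 -> R[i]) : Prop :=
  nonzero_vec x /\ on_fermat k Lam x /\
  exists c : R[i], forall j, H0_act a x j = c * x j.

Definition acts_freely_on_M (R : realType) n d k (Lam : 'M[R[i]]_(n - d - 1, d))
    (K : {set 'rV['Z_k]_n}) : Prop :=
  forall a, a \in K -> a != 0 -> forall x, ~ fixed_point_on_M Lam a x.

From Pilot Require Import Defs.
From mathcomp Require Import all_boot all_order all_algebra all_fingroup.
From mathcomp Require Import all_classical all_reals all_analysis.
From mathcomp Require Import complex.
From mathcomp Require Import zify.
Set Implicit Arguments. Unset Strict Implicit. Unset Printing Implicit Defensive.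
Import GRing.Theory Num.Theory.
Local Open Scope ring_scope.

(* Write a in H_0 = (Z_p)^n as the exponent vector (a_1, ..., a_n, 0) acting on
   the n+1 homogeneous coordinates.  If these exponents take one common value
   v outside two coordinates b1, b2, then a acts as the scalar zeta^v on every
   point of M with x_b1 = x_b2 = 0, so it fixes such a point.  Such points
   exist: M is the preimage under x |-> x^p of a linear space cut out by n-d
   equations, and adding x_b1 = x_b2 = 0 leaves n-d+2 < n+1 equations, so a
   nonzero solution exists and has p-th roots.  Hence a free K contains no
   nonzero element of this shape.
   The family S of the n(p-1)+p elements that are scalar outside ONE
   coordinate (the c e_j with c <> 0, and the constants t(1,...,1)) is
   injective, and any difference of two of its members is scalar outside two
   coordinates.  So the cosets s + K, s in S, are pairwise disjoint, whence
   (n(p-1)+p) p^(n-r) <= p^n, i.e. n+1 <= (p^r-1)/(p-1). *)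

Lemma homogeneous_system_solution (F : fieldType) m k (A : 'M[F]_(m, k)) :
  (k < m)%N -> exists2 u : 'rV_m, u != 0 & u *m A = 0.
Proof.
move=> k_lt_m; exists (nz_row (kermx A)); last exact/sub_kermxP/nz_row_sub.
rewrite nz_row_eq0 -mxrank_eq0 mxrank_ker -lt0n subn_gt0.
exact: leq_ltn_trans (rank_leq_col A) k_lt_m.
Qed.

(* If the differences g i - g i' of a family never lie in K unless i = i',
   the cosets K g i are pairwise distinct, so #|I| #|K| <= #|G| by Lagrange. *)
Lemma card_separated_le (gT : finGroupType) (K : {group gT}) (I : finType)
    (g : I -> gT) :
  (forall i i', (g i * (g i')^-1)%g \in K -> i = i') -> (#|I| * #|K| <= #|gT|)%N.
Proof.
move=> sep.
have coset_inj : injective (fun i => (K :* g i)%g).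
  by move=> i i' eqK; apply: sep; rewrite -mem_rcoset -eqK rcoset_refl.
have sub : [set (K :* g i)%g | i : I] \subset rcosets K [set: gT].
  by apply/fintype.subsetP=> _ /imsetP[i _ ->]; apply/rcosetsP; exists (g i); rewrite ?inE.
have index_eq : (#|K| * #|rcosets K [set: gT]|)%N = #|gT|.
  by rewrite -cardsT -(Lagrange (finset.subsetT K)).
rewrite -index_eq mulnC leq_pmul2l ?cardG_gt0 //.
by rewrite -(card_imset _ coset_inj); apply: subset_leq_card.
Qed.

(* Coefficient of y_j in the i-th defining equation of M^1_n(Lambda),
   lambda_{i,1} y_1 + ... + lambda_{i,d} y_d + y_{d+1} + y_{d+2+i} = 0. *)
Definition fermat_coef (C : nzRingType) n d (Lam : 'M[C]_(n - d - 1, d))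
    (i : nat) (j : 'I_n.+1) : C :=
  (if (j < d)%N then lam0 Lam i j else 0)
  + (j == d :> nat)%:R + (j == d.+1 + i :> nat)%:R.

Lemma sum_select (C : nzRingType) m (y : 'I_m.+1 -> C) (k : nat) :
  (k < m.+1)%N -> \sum_(j < m.+1) (j == k :> nat)%:R * y j = y (inord k).
Proof.
move=> lt_k; rewrite (bigD1 (inord k)) //= inordK // eqxx mul1r big1 ?addr0 //.
move=> j /negbTE; rewrite -(inj_eq val_inj) /= inordK // => ->; exact: mul0r.
Qed.

Lemma on_fermatE (C : nzRingType) n d k (Lam : 'M[C]_(n - d - 1, d))
    (x : 'I_n.+1 -> C) : (d <= n)%N ->
  on_fermat k Lam x <->
  forall i, (i < n - d)%N -> \sum_j fermat_coef Lam i j * x j ^+ k = 0.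
Proof.
move=> d_le_n.
suff lhsE i : (i < n - d)%N ->
    \sum_(j < d) lam0 Lam i j * Defs.coord x j ^+ k + Defs.coord x d ^+ k
      + Defs.coord x (d.+1 + i) ^+ k = \sum_j fermat_coef Lam i j * x j ^+ k.
  by split=> eqs i lt_i; [rewrite -lhsE // eqs | rewrite lhsE // eqs].
move=> lt_i; rewrite /fermat_coef.
under [RHS]eq_bigr do rewrite !mulrDl.
rewrite !big_split /= !sum_select; [|lia|lia].
congr (_ + _ + _).
rewrite (big_ord_widen n.+1 (fun j => lam0 Lam i j * Defs.coord x j ^+ k)) ?big_mkcond; last by lia.
apply: eq_bigr => j _; rewrite /Defs.coord inord_val; by case: ifP; rewrite ?mul0r.
Qed.

(* Every pair of coordinate hyperplanes meets M^k_n(Lambda): the linear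
   system for y = x^k together with y_b1 = y_b2 = 0 has n-d+2 < n+1 equations,
   and coordinatewise k-th roots of a nonzero solution give the point. *)
Lemma fermat_point_on_two_hyperplanes (C : numClosedFieldType) n d k
    (Lam : 'M[C]_(n - d - 1, d)) (b1 b2 : 'I_n.+1) :
  (2 <= d)%N -> (d <= n)%N -> (0 < k)%N ->
  exists x, nonzero_vec x /\ on_fermat k Lam x /\ x b1 = 0 /\ x b2 = 0.
Proof.
move=> d_ge2 d_le_n k_gt0.
pose A : 'M[C]_(n.+1, (n - d).+2) := \matrix_(j, c)
  if (c < n - d)%N then fermat_coef Lam c j
  else if c == (n - d)%N :> nat then (j == b1 :> nat)%:R else (j == b2 :> nat)%:R.
have [u u_neq0 uA0] : exists2 u : 'rV_n.+1, u != 0 & u *m A = 0.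
  by apply: homogeneous_system_solution; lia.
have eqn c : \sum_j A j c * u 0 j = 0.
  have /matrixP/(_ 0 c) := uA0; rewrite !mxE => uAc.
  by rewrite -[RHS]uAc; apply: eq_bigr => j _; rewrite mulrC.
have u_on_hyperplane (b : 'I_n.+1) (c : 'I_(n - d).+2) :
    (forall j, A j c = (j == b :> nat)%:R) -> u 0 b = 0.
  move=> Ac; have := eqn c.
  rewrite (eq_bigr (fun j : 'I_n.+1 => (j == b :> nat)%:R * u 0 j)) => [|j _]; last by rewrite Ac.
  by rewrite (sum_select _ (ltn_ord b)) inord_val.
pose x j := k.-root (u 0 j).
have xK j : x j ^+ k = u 0 j by rewrite rootCK.
exists x; split; [|split; [|split]].
- have [j uj] : exists j, u 0 j != 0.
    apply/existsP; apply: contraNT u_neq0 => /existsPn u0.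
    by apply/eqP/rowP => j; rewrite mxE; apply/eqP/negbNE/u0.
  by exists j; rewrite rootC_eq0.
- apply/on_fermatE => // i lt_i; under eq_bigr do rewrite xK.
  have lt_i2 : (i < (n - d).+2)%N by lia.
  by rewrite -[RHS](eqn (Ordinal lt_i2)); apply: eq_bigr => j _; rewrite mxE /= lt_i.
- rewrite /x (u_on_hyperplane b1 (Ordinal (leqnSn (n - d).+1))) ?rootC0 //.
  by move=> j; rewrite mxE /= ltnn eqxx.
- rewrite /x (u_on_hyperplane b2 (Ordinal (leqnn (n - d).+2))) ?rootC0 //.
  by move=> j; rewrite mxE /= ltnNge leqnSn /= eqn_leq ltnn.
Qed.

(* a in H_0 has exponent v on every homogeneous coordinate outside B (the
   last coordinate having exponent 0): a acts as zeta^v away from B. *)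
Definition scalar_outside p n (a : 'rV['Z_p]_n) (v : 'Z_p) (B : pred 'I_n.+1) :=
  (forall j : 'I_n, ~~ B (widen_ord (leqnSn n) j) -> a 0 j = v)
  /\ (~~ B ord_max -> v = 0).

Lemma scalar_outsideB p n (a a' : 'rV['Z_p]_n) v v' B B' :
  scalar_outside a v B -> scalar_outside a' v' B' ->
  scalar_outside (a - a') (v - v') (predU B B').
Proof.
move=> [a_v a_last] [a'_v' a'_last]; split=> [j | ] /=; rewrite negb_or => /andP[nB nB'].
  by rewrite !mxE a_v // a'_v'.
by rewrite a_last // a'_last // subr0.
Qed.

Lemma H0_act_scalar_outside (R : realType) p n (a : 'rV['Z_p]_n) v B
    (x : 'I_n.+1 -> R[i]) :
  scalar_outside a v B -> (forall j, B j -> x j = 0) ->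
  forall j, H0_act a x j = zeta R p ^+ v * x j.
Proof.
move=> [a_v a_last] x_B j; rewrite /H0_act.
have [/x_B xj0 | nBj] := boolP (B j); first by case: insubP => *; rewrite xj0 !mulr0.
case: insubP => [j' _ j'_val | j_ge_n].
  have j_eq : j = widen_ord (leqnSn n) j' by apply/val_inj.
  by rewrite a_v // -j_eq.
have j_max : j = ord_max by apply/val_inj/eqP; rewrite eqn_leq -ltnS ltn_ord leqNgt j_ge_n.
by rewrite a_last ?expr0 ?mul1r // -j_max.
Qed.

(* A freely acting subgroup contains no nonzero element that is scalar
   outside two coordinates, since such an element fixes a point of M. *)
Lemma free_scalar_outside_eq0 (R : realType) n d p (Lam : 'M[R[i]]_(n - d - 1, d))
    (K : {set 'rV['Z_p]_n}) (a : 'rV['Z_p]_n) v (b1 b2 : 'I_n.+1) :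
  (2 <= d)%N -> (d <= n)%N -> (0 < p)%N -> acts_freely_on_M Lam K -> a \in K ->
  scalar_outside a v (predU (pred1 b1) (pred1 b2)) -> a = 0.
Proof.
move=> d_ge2 d_le_n p_gt0 free aK a_scalar; apply/eqP; apply: contraT => a_neq0.
have [x [x_neq0 [x_on_M [x_b1 x_b2]]]] :=
  fermat_point_on_two_hyperplanes Lam b1 b2 d_ge2 d_le_n p_gt0.
case: (free a aK a_neq0 x); split => //; split => //; exists (zeta R p ^+ v).
by apply: H0_act_scalar_outside a_scalar _ => j /orP[] /eqP ->.
Qed.

(* The family S of elements of H_0 scalar outside a single coordinate:
   (c+1) e_j for j < n and c < p-1, and the constant vectors t(1,...,1). *)
Definition almost_scalar p n (i : 'I_n * 'I_p.-1 + 'Z_p) : 'rV['Z_p]_n :=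
  match i with
  | inl (j, c) => \row_k (if k == j then (c : nat).+1%:R else 0)
  | inr t => const_mx t
  end.

Lemma almost_scalar_outside p n (i : 'I_n * 'I_p.-1 + 'Z_p) :
  exists v b, scalar_outside (@almost_scalar p n i) v (pred1 b).
Proof.
case: i => [[j c] | t]; last by exists t, ord_max; split=> [k _|]; rewrite ?mxE //= eqxx.
exists 0, (widen_ord (leqnSn n) j); split=> // k /= k_neq_j.
by rewrite mxE ifN //; apply: contraNneq k_neq_j => ->.
Qed.

Lemma Zp_nat_inj p k k' : (1 < p)%N -> (k < p)%N -> (k' < p)%N ->
  (k%:R : 'Z_p) = k'%:R -> k = k'.
Proof. by move=> p_gt1 lt_k lt_k' /(congr1 (@nat_of_ord _)); rewrite !val_Zp_nat // !modn_small. Qed.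

Lemma almost_scalar_inj p n : (1 < p)%N -> (1 < n)%N -> injective (@almost_scalar p n).
Proof.
move=> p_gt1 n_gt1.
have axis_neq0 (c : 'I_p.-1) : (c : nat).+1%:R != 0 :> 'Z_p.
  apply/eqP => eq0; suff : (c : nat).+1 = 0%N by [].
  by apply: (@Zp_nat_inj p _ 0 p_gt1) eq0; have := ltn_ord c; lia.
have axis_neq_const (j : 'I_n) (c : 'I_p.-1) t : almost_scalar (inl (j, c)) != almost_scalar (inr t).
  have [l l_neq_j] : exists l : 'I_n, l != j.
    have [j0 | j_neq0] := eqVneq (val j) 0.
    - by exists (Ordinal n_gt1); rewrite -(inj_eq val_inj) /= j0.
    - by exists (Ordinal (ltnW n_gt1)); rewrite -(inj_eq val_inj) /= eq_sym.
  apply/eqP => /rowP eq_row; move: (eq_row j) (eq_row l).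
  by rewrite !mxE eqxx (negbTE l_neq_j) => <- /esym/eqP; apply/negP/axis_neq0.
move=> [[j c] | t] [[j' c'] | t'] eq_ff.
- move/rowP/(_ j): eq_ff; rewrite !mxE eqxx.
  have [<- eq_Zp | _ /eqP] := eqVneq j j'; last by rewrite (negbTE (axis_neq0 c)).
  have [eq_c] : (c : nat).+1 = (c' : nat).+1.
    by apply: (Zp_nat_inj p_gt1) eq_Zp; [have := ltn_ord c | have := ltn_ord c']; lia.
  by congr (inl (_, _)); apply/val_inj.
- by case/eqP: (axis_neq_const j c t').
- by case/eqP: (axis_neq_const j' c' t).
- by move/rowP/(_ (Ordinal (ltnW n_gt1))): eq_ff; rewrite !mxE => ->.
Qed.

Theorem mainTheorem5 (R : realType) (d n p r : nat)
  (Lam : 'M[R[i]]_(n - d - 1, d))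
  (K : {group 'rV['Z_p]_n}) :
  (2 <= d)%N -> (d.+1 <= n)%N -> prime p -> (r <= n)%N ->
  X_nd Lam ->
  (K \isog [set: 'rV['Z_p]_(n - r)])%g ->
  acts_freely_on_M Lam K ->
  (n.+1 <= (p ^ r - 1) %/ (p - 1))%N.
Proof.
move=> d_ge2 d_lt_n p_prime r_le_n _ K_iso free.
have p_gt1 := prime_gt1 p_prime.
have separated (i i' : 'I_n * 'I_p.-1 + 'Z_p) :
    (almost_scalar i * (almost_scalar i')^-1)%g \in K -> i = i'.
  move=> diff_K; apply: almost_scalar_inj => //; first lia.
  apply/eqP; rewrite -subr_eq0; apply/eqP.
  have [v [b scalar_i]] := almost_scalar_outside i.
  have [v' [b' scalar_i']] := almost_scalar_outside i'.
  by apply: free_scalar_outside_eq0 free diff_K (scalar_outsideB scalar_i scalar_i'); lia.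
have card_Zp : #|{: 'Z_p}| = p by rewrite card_ord Zp_cast.
have card_K : #|K| = (p ^ (n - r))%N.
  by rewrite (card_isog K_iso) cardsT card_mx card_Zp mul1n.
have card_H0 : #|{: 'rV['Z_p]_n}| = (p ^ n)%N by rewrite card_mx card_Zp mul1n.
have := card_separated_le separated.
rewrite card_sum card_prod !card_ord Zp_cast // card_K card_H0.
rewrite -(subnKC r_le_n) expnD addKn leq_pmul2r ?expn_gt0 ?(ltnW p_gt1) // => bound.
by rewrite leq_divRL; lia.
Qed.
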